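(* With $\mathcal I_1,\dots,\mathcal I_6$ as defined in the context, the following hold: (i) $\mathcal I_2\mathcal I_3^2-4\mathcal I_4\mathcal I_5-\mathcal I_6^2=0$ identically on $\mathfrak{sl}(3,\mathbb C)$; (ii) $\mathcal I_1,\dots,\mathcal I_5$ are algebraically independent, and this relation generates the ideal of all polynomial relations among $\mathcal I_1,\dots,\mathcal I_6$; (iii) the algebra $R=\mathbb C[\mathcal I_1,\dots,\mathcal I_6]$ decomposes as a direct sum of graded vector spaces $R=\mathbb C[\mathcal I_1,\dots,\mathcal I_5]\oplus\mathcal I_6\,\mathbb C[\mathcal I_1,\dots,\mathcal I_5]$ (a Hironaka decomposition with primary invariants $\mathcal I_1,\dots,\mathcal I_5$ and secondary invariants $1,\mathcal I_6$); (iv) the Hilbert series of $R$ (graded by polynomial degree) is $$H(R,q)=\frac{1+q^3}{(1-q)(1-q^2)^2(1-q^3)^2}.$$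
   Context: For $M=(m_{ij})\in\mathfrak{sl}(3,\mathbb C)$ (traceless $3\times3$ complex matrices) define the linear coordinate functions $x_1=m_{12}$, $y_1=m_{21}$, $x_2=m_{23}$, $y_2=m_{32}$, $x_3=m_{13}$, $y_3=m_{31}$, $h_1=m_{11}-m_{22}$, $h_0=\tfrac12(m_{11}+m_{22})-m_{33}$. Define the polynomials $\mathcal I_1=h_0$, $\mathcal I_2=h_1^2+4x_1y_1$, $\mathcal I_3=x_2y_2+x_3y_3$, $\mathcal I_4=h_1y_2y_3+y_1y_2^2-x_1y_3^2$, $\mathcal I_5=h_1x_2x_3+x_1x_2^2-x_3^2y_1$, $\mathcal I_6=h_1(x_2y_2-x_3y_3)-2(y_1y_2x_3+x_1x_2y_3)$. *)

(* C : numClosedFieldType stands for the complex numbers. *)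
From HB Require Import structures.
From mathcomp Require Import all_boot all_order all_algebra.
Set Implicit Arguments. Unset Strict Implicit. Unset Printing Implicit Defensive.
Import Order.TTheory GRing.Theory Num.Theory.
Local Open Scope ring_scope.

(* Multivariate polynomials as iterated univariate polynomials.
   P5 C = C[y1][y2][y3][y4][y5],  P6 C = (P5 C)[y6]. *)
Notation P5 C := {poly {poly {poly {poly {poly C}}}}}.
Notation P6 C := {poly {poly {poly {poly {poly {poly C}}}}}}.

Definition ev5 (C : numClosedFieldType) (p : P5 C) (a1 a2 a3 a4 a5 : C) : C :=
  ((((p.[a5%:P%:P%:P%:P]).[a4%:P%:P%:P]).[a3%:P%:P]).[a2%:P]).[a1].

Definition ev6 (C : numClosedFieldType) (p : P6 C) (a1 a2 a3 a4 a5 a6 : C) : C :=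
  ev5 (p.[a6%:P%:P%:P%:P%:P]) a1 a2 a3 a4 a5.

Definition Y1 (C : numClosedFieldType) : P6 C := ('X : {poly C})%:P%:P%:P%:P%:P.
Definition Y2 (C : numClosedFieldType) : P6 C := ('X : {poly {poly C}})%:P%:P%:P%:P.
Definition Y3 (C : numClosedFieldType) : P6 C := ('X : {poly {poly {poly C}}})%:P%:P%:P.
Definition Y4 (C : numClosedFieldType) : P6 C := ('X : {poly {poly {poly {poly C}}}})%:P%:P.
Definition Y5 (C : numClosedFieldType) : P6 C := ('X : P5 C)%:P.
Definition Y6 (C : numClosedFieldType) : P6 C := 'X.

Definition Rel (C : numClosedFieldType) : P6 C :=
  Y2 C * Y3 C ^+ 2 - 4%:R * Y4 C * Y5 C - Y6 C ^+ 2.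

Definition i0 : 'I_3 := @Ordinal 3 0 isT.
Definition i1 : 'I_3 := @Ordinal 3 1 isT.
Definition i2 : 'I_3 := @Ordinal 3 2 isT.

Section Coords.
Variable C : numClosedFieldType.
Implicit Types M : 'M[C]_3.
Definition cx1 M := M i0 i1.
Definition cy1 M := M i1 i0.
Definition cx2 M := M i1 i2.
Definition cy2 M := M i2 i1.
Definition cx3 M := M i0 i2.
Definition cy3 M := M i2 i0.
Definition ch1 M := M i0 i0 - M i1 i1.
Definition ch0 M := (M i0 i0 + M i1 i1) / 2%:R - M i2 i2.

Definition I1 M := ch0 M.
Definition I2 M := ch1 M ^+ 2 + 4%:R * cx1 M * cy1 M.
Definition I3 M := cx2 M * cy2 M + cx3 M * cy3 M.
Definition I4 M := ch1 M * cy2 M * cy3 M + cy1 M * cy2 M ^+ 2 - cx1 M * cy3 M ^+ 2.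
Definition I5 M := ch1 M * cx2 M * cx3 M + cx1 M * cx2 M ^+ 2 - cx3 M ^+ 2 * cy1 M.
Definition I6 M := ch1 M * (cx2 M * cy2 M - cx3 M * cy3 M)
                   - 2%:R * (cy1 M * cy2 M * cx3 M + cx1 M * cx2 M * cy3 M).

Definition evI5 (p : P5 C) M := ev5 p (I1 M) (I2 M) (I3 M) (I4 M) (I5 M).
Definition evI6 (p : P6 C) M := ev6 p (I1 M) (I2 M) (I3 M) (I4 M) (I5 M) (I6 M).

Definition inR (g : 'M[C]_3 -> C) :=
  exists p : P6 C, forall M, \tr M = 0 -> g M = evI6 p M.

(* g belongs to the degree-d homogeneous component R_d of R *)
Definition inRd (d : nat) (g : 'M[C]_3 -> C) :=
  inR g /\ forall (t : C) M, \tr M = 0 -> g (t *: M) = t ^+ d * g M.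

Definition lin_indep (k : nat) (f : 'I_k -> 'M[C]_3 -> C) :=
  forall c : 'I_k -> C,
    (forall M, \tr M = 0 -> \sum_(i < k) c i * f i M = 0) -> forall i, c i = 0.

(* dim_C R_d = r *)
Definition dimRd (d r : nat) :=
  (exists f : 'I_r -> 'M[C]_3 -> C, (forall i, inRd d (f i)) /\ lin_indep f) /\
  (forall f : 'I_r.+1 -> 'M[C]_3 -> C, (forall i, inRd d (f i)) -> ~ lin_indep f).
End Coords.

Definition HilbNum : {poly int} := 1 + 'X^3.
Definition HilbDen : {poly int} :=
  (1 - 'X) * (1 - 'X^2) ^+ 2 * (1 - 'X^3) ^+ 2.

From HB Require Import structures.
From mathcomp Require Import all_boot all_order all_algebra.
From mathcomp Require Import ring zify.
Import Order.TTheory GRing.Theory Num.Theory.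
Local Open Scope ring_scope.
Set Implicit Arguments. Unset Strict Implicit. Unset Printing Implicit Defensive.

(* - (i) is a polynomial identity in the entries.  The explicit traceless
     matrix [section5] takes any value (a1, ..., a5) with a4 <> 0 for
     (I1, ..., I5), so a polynomial vanishing on (I1, ..., I5)(sl(3)) is
     killed by y4, hence zero: this is (ii a).  The involution [flip] of
     sl(3) fixes I1, ..., I5 and negates I6, so A(I) + I6 B(I) = 0 forces
     A(I) = 0 and I6 B(I) = 0; as I6^2 = disc(I) for a nonzero polynomial
     disc, also B = 0.  This is uniqueness in (iii).
   - Division by Rel, monic of degree 2 in y6, writes every p as
     q Rel + A + B y6 with A, B in C[y1, ..., y5] ([reduce]).  This gives
     existence in (iii), and with uniqueness it gives (ii b).
   - By (iii) the monomials I1^a I2^b I3^c I4^e I5^f I6^g with g <= 1 span R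
     and are linearly independent; those of degree d form a basis of R_d, so
     dim R_d counts exponents of weighted degree d, and (iv) becomes an
     identity between generating polynomials of exponent boxes.

   Polynomials in y1, ..., y5 are handled in copies [Q1], ..., [Q5] of the
   iterated polynomial rings carrying their own canonical instances:
   unification on the iterated {poly _} types of the statement is extremely
   slow, whereas the copies are convertible to them, so results are
   transported by conversion (checked by the kernel, [exact_no_check] only
   skipping the slow elaboration-time check).  For the same reason, all
   computations on P6 C apply the morphism laws to explicit arguments, and
   the coercions between these types are expanded eagerly: *)
Strategy expand [reverse_coercion].

Section MatrixLevel.
Variable C : numClosedFieldType.
Implicit Types (M : 'M[C]_3) (t : C).

Lemma syzygy M : I2 M * I3 M ^+ 2 - 4%:R * I4 M * I5 M - I6 M ^+ 2 = 0.
Proof. rewrite /I2 /I3 /I4 /I5 /I6; ring. Qed.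

Lemma mxtrace3 M : \tr M = M i0 i0 + M i1 i1 + M i2 i2.
Proof.
by rewrite /mxtrace !big_ord_recr big_ord0 /= add0r; congr (_ + _ + _);
  congr (M _ _); apply: val_inj.
Qed.

Definition mx3 (m11 m12 m13 m21 m22 m23 m31 m32 m33 : C) : 'M[C]_3 :=
  \matrix_(i < 3, j < 3)
    nth 0 (nth [::] [:: [:: m11; m12; m13]; [:: m21; m22; m23];
                        [:: m31; m32; m33]] i) j.

Lemma mx3_trace m11 m12 m13 m21 m22 m23 m31 m32 m33 :
  \tr (mx3 m11 m12 m13 m21 m22 m23 m31 m32 m33) = m11 + m22 + m33.
Proof. by rewrite mxtrace3 !mxE. Qed.

(* The involution of sl(3) exchanging m11, m22 and negating m13, m31, i.e.
   changing the signs of h1, x3 and y3: it separates I6 from I1, ..., I5. *)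
Definition flip M : 'M[C]_3 :=
  mx3 (M i1 i1) (M i0 i1) (- M i0 i2) (M i1 i0) (M i0 i0) (M i1 i2)
      (- M i2 i0) (M i2 i1) (M i2 i2).

Lemma flip_trace M : \tr (flip M) = \tr M.
Proof. by rewrite mx3_trace mxtrace3 (addrC (M i1 i1)). Qed.

Lemma flip_fixes M :
  [/\ I1 (flip M) = I1 M, I2 (flip M) = I2 M, I3 (flip M) = I3 M,
      I4 (flip M) = I4 M & I5 (flip M) = I5 M].
Proof.
rewrite /I1 /I2 /I3 /I4 /I5 /ch0 /ch1 /cx1 /cy1 /cx2 /cy2 /cx3 /cy3 !mxE /=.
by split; ring.
Qed.

Lemma flip_I6 M : I6 (flip M) = - I6 M.
Proof. rewrite /I6 /ch1 /cx1 /cy1 /cx2 /cy2 /cx3 /cy3 !mxE /=; ring. Qed.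

Lemma invariantsZ t M :
  [/\ I1 (t *: M) = t * I1 M, I2 (t *: M) = t ^+ 2 * I2 M,
      I3 (t *: M) = t ^+ 2 * I3 M, I4 (t *: M) = t ^+ 3 * I4 M
    & I5 (t *: M) = t ^+ 3 * I5 M].
Proof.
rewrite /I1 /I2 /I3 /I4 /I5 /ch0 /ch1 /cx1 /cy1 /cx2 /cy2 /cx3 /cy3 !mxE.
by split; ring.
Qed.

Lemma I6Z t M : I6 (t *: M) = t ^+ 3 * I6 M.
Proof. rewrite /I6 /ch1 /cx1 /cy1 /cx2 /cy2 /cx3 /cy3 !mxE; ring. Qed.

Lemma natC_neq0 n : (n.+1%:R : C) != 0.
Proof. by rewrite pnatr_eq0. Qed.

(* A traceless matrix with prescribed values a1, ..., a5 of I1, ..., I5,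
   provided a4 <> 0; the square root is where closedness of C is used. *)
Definition section5 (a1 a2 a3 a4 a5 : C) : 'M[C]_3 :=
  let x1 := a2 / (4%:R * a4) in
  let r := sqrtC ((x1 * a3 ^+ 2 - a5) / a4) in
  mx3 (a1 / 3%:R) x1 r a4 (a1 / 3%:R) a3 0 1 (- (2%:R * a1 / 3%:R)).

Lemma section5_trace a1 a2 a3 a4 a5 : \tr (section5 a1 a2 a3 a4 a5) = 0.
Proof. by have h3 := natC_neq0 2; rewrite mx3_trace; field. Qed.

Lemma section5_invariants a1 a2 a3 a4 a5 : a4 != 0 ->
  let M := section5 a1 a2 a3 a4 a5 in
  [/\ I1 M = a1, I2 M = a2, I3 M = a3, I4 M = a4 & I5 M = a5].
Proof.
move=> a4n0 /=; have h2 := natC_neq0 1; have h3 := natC_neq0 2.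
rewrite /I1 /I2 /I3 /I4 /I5 /ch0 /ch1 /cx1 /cy1 /cx2 /cy2 /cx3 /cy3 !mxE /=.
by split; [field | field | ring | ring | rewrite sqrtCK; field].
Qed.
End MatrixLevel.

Section EvaluationMorphisms.
Variable C : numClosedFieldType.

(* Maps preserving 0, 1, + and *; evaluations of polynomials are such maps.
   Semirings (rather than rings) keep canonical-structure inference cheap on
   iterated polynomial types. *)
Definition eval_hom (R : nzSemiRingType) (phi : R -> C) :=
  [/\ phi 0 = 0, phi 1 = 1, forall x y, phi (x + y) = phi x + phi y
    & forall x y, phi (x * y) = phi x * phi y].

Definition central (R : nzSemiRingType) (z : R) := forall r, z * r = r * z.

Lemma central_polyC (R : nzSemiRingType) (z : R) : central z -> central z%:P.
Proof. by move=> hz r; apply/polyP => i; rewrite coefCM coefMC hz. Qed.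

Lemma centralC (a : C) : central a.
Proof. by move=> r; rewrite mulrC. Qed.

Lemma eval_hom_horner (R : nzSemiRingType) (phi : R -> C) (z : R) :
  eval_hom phi -> central z -> eval_hom (fun p : {poly R} => phi p.[z]).
Proof.
case=> h0 h1 hD hM hz; split=> [|||x y]; rewrite ?horner0 ?hornerC //.
  by move=> x y; rewrite hornerD hD.
by rewrite hornerM_comm ?hM // /comm_poly hz.
Qed.

Section Laws.
Variables (R : nzSemiRingType) (phi : R -> C).
Hypothesis hphi : eval_hom phi.

Lemma eval_sum I (r : seq I) (F : I -> R) :
  phi (\sum_(i <- r) F i) = \sum_(i <- r) phi (F i).
Proof.
have [h0 _ hD _] := hphi; elim: r => [|x r IH]; first by rewrite !big_nil.
by rewrite !big_cons hD IH.
Qed.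

Lemma eval_exp x n : phi (x ^+ n) = phi x ^+ n.
Proof.
have [_ h1 _ hM] := hphi.
by elim: n => [|n IH]; rewrite ?expr0 // !exprS hM IH.
Qed.

Lemma eval_nat n : phi n%:R = n%:R.
Proof.
have [h0 h1 hD _] := hphi.
by elim: n => [|n IH]; rewrite // !mulrS hD h1 IH.
Qed.
End Laws.

Lemma eval_opp (R : nzRingType) (phi : R -> C) x :
  eval_hom phi -> phi (- x) = - phi x.
Proof.
case=> h0 _ hD _; apply/eqP; rewrite -subr_eq0 opprK -hD.
by rewrite addNr h0.
Qed.

Lemma ev5_hom (a1 a2 a3 a4 a5 : C) :
  eval_hom (fun p : P5 C => ev5 p a1 a2 a3 a4 a5).
Proof.
apply: (eval_hom_horner (phi := fun p => (((p.[a4%:P%:P%:P]).[a3%:P%:P]).[a2%:P]).[a1])).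
  apply: (eval_hom_horner (phi := fun p => ((p.[a3%:P%:P]).[a2%:P]).[a1])).
    apply: (eval_hom_horner (phi := fun p => (p.[a2%:P]).[a1])).
      apply: (eval_hom_horner (phi := fun p => p.[a1])).
        by apply: (eval_hom_horner (phi := id)) (centralC a1).
      exact/central_polyC/centralC.
    exact/central_polyC/central_polyC/centralC.
  exact/central_polyC/central_polyC/central_polyC/centralC.
exact/central_polyC/central_polyC/central_polyC/central_polyC/centralC.
Qed.

Lemma ev6_hom (a1 a2 a3 a4 a5 a6 : C) :
  eval_hom (fun p : P6 C => ev6 p a1 a2 a3 a4 a5 a6).
Proof.
apply: (eval_hom_horner (phi := fun p => ev5 p a1 a2 a3 a4 a5)); first exact: ev5_hom.
exact/central_polyC/central_polyC/central_polyC/central_polyC/central_polyC/centralC.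
Qed.

Lemma ev5_const (t a1 a2 a3 a4 a5 : C) : ev5 t%:P%:P%:P%:P%:P a1 a2 a3 a4 a5 = t.
Proof. by rewrite /ev5 !hornerC. Qed.

Lemma ev6C (c : P5 C) a1 a2 a3 a4 a5 a6 :
  ev6 c%:P a1 a2 a3 a4 a5 a6 = ev5 c a1 a2 a3 a4 a5.
Proof. by rewrite /ev6 hornerC. Qed.

Lemma ev6X a1 a2 a3 a4 a5 a6 : ev6 ('X : P6 C) a1 a2 a3 a4 a5 a6 = a6.
Proof. by rewrite /ev6 hornerX ev5_const. Qed.
End EvaluationMorphisms.

Section FiveVariables.
Variable C : numClosedFieldType.

Definition Q1 := {poly C}.
HB.instance Definition _ := GRing.IntegralDomain.copy Q1 {poly C}.
Definition Q2 := {poly Q1}.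
HB.instance Definition _ := GRing.IntegralDomain.copy Q2 {poly Q1}.
Definition Q3 := {poly Q2}.
HB.instance Definition _ := GRing.IntegralDomain.copy Q3 {poly Q2}.
Definition Q4 := {poly Q3}.
HB.instance Definition _ := GRing.IntegralDomain.copy Q4 {poly Q3}.
Definition Q5 := {poly Q4}.
HB.instance Definition _ := GRing.IntegralDomain.copy Q5 {poly Q4}.

Definition l1 (a : C) : Q1 := a%:P.
Definition l2 (a : C) : Q2 := (l1 a)%:P.
Definition l3 (a : C) : Q3 := (l2 a)%:P.
Definition l4 (a : C) : Q4 := (l3 a)%:P.
Definition l5 (a : C) : Q5 := (l4 a)%:P.

Definition y2 : Q5 := ((('X : Q2)%:P : Q3)%:P : Q4)%:P.
Definition y3 : Q5 := (('X : Q3)%:P : Q4)%:P.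
Definition y4 : Q5 := ('X : Q4)%:P.
Definition y5 : Q5 := 'X.

Definition qe5 (p : Q5) (a1 a2 a3 a4 a5 : C) : C :=
  ((((p.[l4 a5]).[l3 a4]).[l2 a3]).[l1 a2]).[a1].

(* The kernel checks the conversion; elaborating it is the slow part. *)
Lemma ev5E (p : P5 C) a1 a2 a3 a4 a5 :
  ev5 p a1 a2 a3 a4 a5 = qe5 (p : Q5) a1 a2 a3 a4 a5.
Proof. exact_no_check (erefl (ev5 p a1 a2 a3 a4 a5)). Qed.

Lemma qe5_hom a1 a2 a3 a4 a5 : eval_hom (fun p => qe5 p a1 a2 a3 a4 a5).
Proof.
apply: (eval_hom_horner (phi := fun p => (((p.[l3 a4]).[l2 a3]).[l1 a2]).[a1])).
  apply: (eval_hom_horner (phi := fun p => ((p.[l2 a3]).[l1 a2]).[a1])).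
    apply: (eval_hom_horner (phi := fun p => (p.[l1 a2]).[a1])).
      apply: (eval_hom_horner (phi := fun p => p.[a1])).
        by apply: (eval_hom_horner (phi := id)) (centralC a1).
      by move=> r; rewrite mulrC.
    by move=> r; rewrite mulrC.
  by move=> r; rewrite mulrC.
by move=> r; rewrite mulrC.
Qed.

Section Rules.
Variables a1 a2 a3 a4 a5 : C.
Local Notation ev p := (qe5 p a1 a2 a3 a4 a5).

Lemma qe5_0 : ev 0 = 0.
Proof. by case: (qe5_hom a1 a2 a3 a4 a5). Qed.

Lemma qe5D p q : ev (p + q) = ev p + ev q.
Proof. by case: (qe5_hom a1 a2 a3 a4 a5). Qed.

Lemma qe5M p q : ev (p * q) = ev p * ev q.
Proof. by case: (qe5_hom a1 a2 a3 a4 a5). Qed.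

Lemma qe5N p : ev (- p) = - ev p.
Proof. exact: eval_opp (qe5_hom a1 a2 a3 a4 a5). Qed.

Lemma qe5X p n : ev (p ^+ n) = ev p ^+ n.
Proof. exact: (eval_exp (qe5_hom a1 a2 a3 a4 a5) p n). Qed.

Lemma qe5_nat n : ev n%:R = n%:R.
Proof. exact: (eval_nat (qe5_hom a1 a2 a3 a4 a5) n). Qed.

Lemma qe5_const c : ev (l5 c) = c.
Proof. by rewrite /qe5 /l5 /l4 /l3 /l2 /l1 !hornerC. Qed.

Lemma qe5_vars : [/\ ev y2 = a2, ev y3 = a3, ev y4 = a4 & ev y5 = a5].
Proof.
by rewrite /qe5 /y2 /y3 /y4 /y5 /l1 /l2 /l3 /l4; split; rewrite !(hornerC, hornerX).
Qed.
End Rules.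

Lemma natC_inj : injective (fun i : nat => (i%:R : C)).
Proof. by move=> i j /eqP; rewrite eqr_nat => /eqP. Qed.

Lemma poly_eq0_on (S : idomainType) (f : C -> S) : injective f ->
  forall q : {poly S}, (forall c, q.[f c] = 0) -> q = 0.
Proof.
move=> finj q hq; apply/eqP/negPn/negP => qn0.
suff: (size [seq f i%:R | i <- iota 0 (size q)] < size q)%N.
  by rewrite size_map size_iota ltnn.
apply: max_poly_roots qn0 _ _.
  by apply/allP => x /mapP [i _ ->]; rewrite /root hq.
by rewrite map_inj_uniq ?iota_uniq // => i j /finj /natC_inj.
Qed.

Lemma qe5_eq0 (p : Q5) : (forall a1 a2 a3 a4 a5, qe5 p a1 a2 a3 a4 a5 = 0) -> p = 0.
Proof.
move=> h.
apply: (@poly_eq0_on _ l4) => [x y /polyC_inj/polyC_inj/polyC_inj/polyC_inj //|a5].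
apply: (@poly_eq0_on _ l3) => [x y /polyC_inj/polyC_inj/polyC_inj //|a4].
apply: (@poly_eq0_on _ l2) => [x y /polyC_inj/polyC_inj //|a3].
apply: (@poly_eq0_on _ l1) => [x y /polyC_inj //|a2].
by apply: (@poly_eq0_on _ id) => // a1; apply: h.
Qed.
End FiveVariables.

Section Independence.
Variable C : numClosedFieldType.
Implicit Types M : 'M[C]_3.
Local Notation Q5 := (Q5 C).

Definition eI5 (p : Q5) M := qe5 p (I1 M) (I2 M) (I3 M) (I4 M) (I5 M).

Lemma y4_neq0 : y4 C != 0.
Proof. by rewrite /y4 polyC_eq0 polyX_eq0. Qed.

(* (ii a): by [section5], p(I) = 0 on sl(3) forces p to vanish wherever
   a4 <> 0, so that y4 p vanishes on C^5. *)
Lemma alg_indep (p : Q5) : (forall M, \tr M = 0 -> eI5 p M = 0) -> p = 0.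
Proof.
move=> h; apply: (mulIf y4_neq0); rewrite mul0r.
apply: qe5_eq0 => a1 a2 a3 a4 a5; rewrite qe5M.
have [_ _ -> _] := qe5_vars a1 a2 a3 a4 a5.
have [->|a4n0] := eqVneq a4 0; first by rewrite mulr0.
have [e1 e2 e3 e4 e5] := section5_invariants a1 a2 a3 a5 a4n0.
have := h _ (section5_trace a1 a2 a3 a4 a5).
by rewrite /eI5 e1 e2 e3 e4 e5 => ->; rewrite mul0r.
Qed.

Lemma eI5_flip (p : Q5) M : eI5 p (flip M) = eI5 p M.
Proof. by have [e1 e2 e3 e4 e5] := flip_fixes M; rewrite /eI5 e1 e2 e3 e4 e5. Qed.

(* Uniqueness in (iii): comparing M with [flip] M, on which I6 changes sign,
   a(I) + I6 b(I) = 0 on sl(3) forces a(I) = 0. *)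
Lemma decomposition_unique (a b : Q5) :
  (forall M, \tr M = 0 -> eI5 a M + I6 M * eI5 b M = 0) ->
  (forall M, \tr M = 0 -> eI5 a M = 0) /\
  (forall M, \tr M = 0 -> I6 M * eI5 b M = 0).
Proof.
move=> h; have ha M : \tr M = 0 -> eI5 a M = 0.
  move=> tM; have h1 := h M tM.
  have := h (flip M); rewrite flip_trace !eI5_flip flip_I6 => /(_ tM) h2.
  have : 2%:R * eI5 a M = 0 by rewrite -[RHS](addr0 0) -{1}h1 -{1}h2; ring.
  by move/eqP; rewrite mulf_eq0 pnatr_eq0 /= => /eqP.
by split=> // M tM; have := h M tM; rewrite ha // add0r.
Qed.

(* y2 y3^2 - 4 y4 y5, which takes the value I6^2 on sl(3) by (i). *)
Definition disc : Q5 := y2 C * y3 C ^+ 2 - 4%:R * y4 C * y5 C.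

Lemma qe5_disc a1 a2 a3 a4 a5 :
  qe5 disc a1 a2 a3 a4 a5 = a2 * a3 ^+ 2 - 4%:R * a4 * a5.
Proof.
have [e2 e3 e4 e5] := qe5_vars a1 a2 a3 a4 a5.
by rewrite /disc !(qe5D, qe5M, qe5N, qe5X, qe5_nat) e2 e3 e4 e5.
Qed.

Lemma eI5_disc M : eI5 disc M = I6 M ^+ 2.
Proof. by rewrite /eI5 qe5_disc; apply/eqP; rewrite -subr_eq0 syzygy. Qed.

Lemma disc_neq0 : disc != 0.
Proof.
apply/negP => /eqP h; have := qe5_disc 0 1 1 0 0; rewrite h => /eqP.
by rewrite qe5_0 expr1n mulr1 !mulr0 subr0 eq_sym oner_eq0.
Qed.

(* If I6 b(I) = 0 on sl(3), then so is disc b (I) = I6 (I6 b(I)), and b = 0. *)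
Lemma I6_mul_eq0 (b : Q5) : (forall M, \tr M = 0 -> I6 M * eI5 b M = 0) -> b = 0.
Proof.
move=> h; apply: (mulIf disc_neq0); rewrite mul0r.
apply: alg_indep => M tM; rewrite /eI5 qe5M -/(eI5 b M) -/(eI5 disc M).
by rewrite eI5_disc expr2 mulrA [eI5 b M * _]mulrC h // mul0r.
Qed.
End Independence.

Section Reduction.
Variable C : numClosedFieldType.
Implicit Types M : 'M[C]_3.

Definition relv (a2 a3 a4 a5 a6 : C) := a2 * a3 ^+ 2 - 4%:R * a4 * a5 - a6 ^+ 2.

Lemma P5_eq (x y : P5 C) :
  (forall a1 a2 a3 a4 a5, ev5 x a1 a2 a3 a4 a5 = ev5 y a1 a2 a3 a4 a5) -> x = y.
Proof.
move=> h; have e : (x : Q5 C) = y.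
  apply/eqP; rewrite -subr_eq0; apply/eqP; apply: qe5_eq0 => a1 a2 a3 a4 a5.
  by rewrite qe5D qe5N -!ev5E h subrr.
exact_no_check e.
Qed.

Lemma P6_eq (p q : P6 C) :
  (forall a1 a2 a3 a4 a5 a6, ev6 p a1 a2 a3 a4 a5 a6 = ev6 q a1 a2 a3 a4 a5 a6) ->
  p = q.
Proof.
move=> h; apply/polyP => i; apply: P5_eq => a1 a2 a3 a4 a5.
have G := ev5_hom a1 a2 a3 a4 a5; have [_ _ _ gM] := G.
set N := maxn (size p) (size q).
(* ev6 r is the evaluation of the univariate polynomial of the ev5 r`_j *)
have E (r : P6 C) : (size r <= N)%N -> forall t,
    ev6 r a1 a2 a3 a4 a5 t = (\poly_(j < N) ev5 r`_j a1 a2 a3 a4 a5).[t].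
  move=> hr t; rewrite /ev6 (horner_coef_wide _ hr) (eval_sum G) horner_poly.
  by apply: eq_bigr => j _; rewrite gM (eval_exp G) ev5_const.
have e : \poly_(j < N) ev5 p`_j a1 a2 a3 a4 a5 = \poly_(j < N) ev5 q`_j a1 a2 a3 a4 a5.
  apply/eqP; rewrite -subr_eq0; apply/eqP; apply: (@poly_eq0_on C C id) => // t.
  by rewrite hornerD hornerN -E ?leq_maxl // -E ?leq_maxr // h subrr.
have [iN|iN] := ltnP i N.
  by have := congr1 (fun r : {poly C} => r`_i) e; rewrite /= !coef_poly iN.
by rewrite !nth_default // (leq_trans _ iN) // ?leq_maxl ?leq_maxr.
Qed.

Lemma ev6_vars a1 a2 a3 a4 a5 a6 :
  [/\ ev6 (Y2 C) a1 a2 a3 a4 a5 a6 = a2, ev6 (Y3 C) a1 a2 a3 a4 a5 a6 = a3,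
      ev6 (Y4 C) a1 a2 a3 a4 a5 a6 = a4 & ev6 (Y5 C) a1 a2 a3 a4 a5 a6 = a5].
Proof.
by split; rewrite /Y2 /Y3 /Y4 /Y5 ev6C /ev5 !(hornerC, hornerX).
Qed.

(* Rel is Y2 Y3^2 - 4 Y4 Y5 - Y6^2, read as an identity of additive groups;
   this form avoids unfolding ring structures on P6 C. *)
Lemma Rel_add : 'X^2 + 4%:R * Y4 C * Y5 C + Rel C = Y2 C * Y3 C ^+ 2.
Proof.
have sub3 (V : zmodType) (u v s : V) : s + v + ((u - v) - s) = u.
  by rewrite addrC addrA !subrK.
exact_no_check (sub3 (P6 C) (Y2 C * Y3 C ^+ 2) (4%:R * Y4 C * Y5 C) ('X^2)).
Qed.

Lemma ev6_Rel a1 a2 a3 a4 a5 a6 :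
  ev6 (Rel C) a1 a2 a3 a4 a5 a6 = relv a2 a3 a4 a5 a6.
Proof.
have G := ev6_hom a1 a2 a3 a4 a5 a6; have [_ _ gD gM] := G.
have [e2 e3 e4 e5] := ev6_vars a1 a2 a3 a4 a5 a6.
have := congr1 (fun r => ev6 r a1 a2 a3 a4 a5 a6) (Rel_add).
rewrite /= (gD ('X^2 + 4%:R * Y4 C * Y5 C) (Rel C)) (gD ('X^2) (4%:R * Y4 C * Y5 C)).
rewrite (gM (4%:R * Y4 C) (Y5 C)) (gM (4%:R) (Y4 C)) (gM (Y2 C) (Y3 C ^+ 2)).
rewrite (eval_exp G 'X 2) (eval_exp G (Y3 C) 2) (eval_nat G 4).
rewrite (ev6X a1 a2 a3 a4 a5 a6) e2 e3 e4 e5 => E.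
by rewrite /relv -E; ring.
Qed.

Lemma P6_ind (K : P6 C -> Prop) : K 0 ->
  (forall (p : P6 C) (c : P5 C), K p -> K (p * 'X + c%:P)) -> forall p, K p.
Proof. move=> h0 hS p; exact_no_check (poly_ind h0 hS p). Qed.

(* Reduction modulo Rel, which is monic of degree 2 in y6: by induction on
   p as a polynomial in y6, p = q Rel + A + B y6 as functions on C^6, with
   A, B polynomials in y1, ..., y5. *)
Lemma reduce (p : P6 C) : exists (q : P6 C) (A B : Q5 C),
  forall a1 a2 a3 a4 a5 a6, ev6 p a1 a2 a3 a4 a5 a6 =
    ev6 q a1 a2 a3 a4 a5 a6 * relv a2 a3 a4 a5 a6
    + qe5 A a1 a2 a3 a4 a5 + qe5 B a1 a2 a3 a4 a5 * a6.
Proof.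
elim/P6_ind: p => [|p c [q [A [B IH]]]].
  exists 0, 0, 0 => a1 a2 a3 a4 a5 a6; have [g0 _ _ _] := ev6_hom a1 a2 a3 a4 a5 a6.
  by rewrite g0 !qe5_0 !mul0r !addr0.
exists (q * 'X + ((B * l5 (-1) : Q5 C) : P5 C)%:P), ((c : Q5 C) + B * disc C), A.
move=> a1 a2 a3 a4 a5 a6; have [_ _ gD gM] := ev6_hom a1 a2 a3 a4 a5 a6.
rewrite (gD (p * 'X) c%:P) (gM p 'X) (ev6X a1 a2 a3 a4 a5 a6) (ev6C c) IH.
rewrite (gD (q * 'X) _) (gM q 'X) (ev6X a1 a2 a3 a4 a5 a6) ev6C !ev5E.
by rewrite qe5D !qe5M qe5_const qe5_disc /relv; ring.
Qed.

Lemma relv_invariants M : relv (I2 M) (I3 M) (I4 M) (I5 M) (I6 M) = 0.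
Proof. exact: syzygy. Qed.

Lemma decomposition_exists (p : P6 C) : exists a b : P5 C, forall M, \tr M = 0 ->
  evI6 p M = evI5 a M + I6 M * evI5 b M.
Proof.
have [q [A [B H]]] := reduce p; exists (A : P5 C), (B : P5 C) => M tM.
by rewrite /evI6 H relv_invariants mulr0 add0r /evI5 !ev5E mulrC.
Qed.

(* (ii b): a relation reduces to A + B y6 with A(I) + I6 B(I) = 0 on sl(3),
   and uniqueness in (iii) gives A = B = 0. *)
Lemma relations_generated (p : P6 C) : (forall M, \tr M = 0 -> evI6 p M = 0) ->
  exists q : P6 C, p = q * Rel C.
Proof.
move=> h; have [q [A [B H]]] := reduce p.
have hAB M : \tr M = 0 -> eI5 A M + I6 M * eI5 B M = 0.
  by move=> tM; have := h M tM; rewrite /evI6 H relv_invariants mulr0 add0r mulrC.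
have [/alg_indep A0 /I6_mul_eq0 B0] := decomposition_unique hAB.
exists q; apply: P6_eq => a1 a2 a3 a4 a5 a6.
have [_ _ _ gM] := ev6_hom a1 a2 a3 a4 a5 a6.
by rewrite (gM q (Rel C)) ev6_Rel H A0 B0 qe5_0 mul0r !addr0.
Qed.
End Reduction.

(* Exponents (a, b, c, e, f) of I1^a I2^b I3^c I4^e I5^f, and such exponents
   completed by the exponent g in {0, 1} of I6. *)
Definition E5 := (nat * nat * nat * nat * nat)%type.
Definition E := (E5 * bool)%type.

Definition w5 (m : E5) : nat :=
  let: (a, b, c, e, f) := m in (a + 2 * b + 2 * c + 3 * e + 3 * f)%N.
Definition w (m : E) : nat := (w5 m.1 + 3 * m.2)%N.

Definition box (N : nat) : seq E :=
  let r := iota 0 N.+1 in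
  [seq (x, g) | x <- [seq (x, f) | x <- [seq (x, e) | x <- [seq (x, c) | x <-
     [seq (a, b) | a <- r, b <- r], c <- r], e <- r], f <- r],
     g <- [:: false; true]].
Definition mons N d := [seq m <- box N | w m == d].

(* The number of exponents of degree d: this will be dim R_d. *)
Definition nmons d := size (mons d d).

Lemma uniq_pairs (S T : eqType) (s : seq S) (t : seq T) :
  uniq s -> uniq t -> uniq [seq (x, y) | x <- s, y <- t].
Proof. by move=> us ut; apply: allpairs_uniq => // [[a b]] [c d] _ _. Qed.

Lemma uniq_box N : uniq (box N).
Proof. by rewrite /box !uniq_pairs // iota_uniq. Qed.

Lemma mem_box N (m : E) : (w m <= N)%N -> m \in box N.
Proof.
case: m => [[[[[a b] c] e] f] g] /=; rewrite /w /w5 /= => hw.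
rewrite /box; apply: allpairs_f; last by case: (g) hw.
do 3 (apply: allpairs_f; last by rewrite mem_iota; lia).
by apply: allpairs_f; rewrite mem_iota; lia.
Qed.

Lemma mem_mons N d m : (d <= N)%N -> (m \in mons N d) = (w m == d).
Proof.
move=> dN; rewrite mem_filter; case: eqP => //= hw.
by apply: mem_box; rewrite hw.
Qed.

Lemma uniq_mons N d : uniq (mons N d).
Proof. exact/filter_uniq/uniq_box. Qed.

Lemma size_mons N d : (d <= N)%N -> size (mons N d) = nmons d.
Proof.
move=> dN; apply: perm_size; apply: uniq_perm; rewrite ?uniq_mons // => m.
by rewrite !mem_mons.
Qed.

Definition box_poly N : {poly int} := \sum_(m <- box N) 'X^(w m).

Lemma sum_count (T : Type) (s : seq T) (P : pred T) :
  \sum_(x <- s) ((P x)%:R : int) = (count P s)%:R.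
Proof. by elim: s => [|x s IH]; rewrite ?big_nil // big_cons IH /= natrD. Qed.

Lemma coef_box_poly N i : (box_poly N)`_i = (size (mons N i))%:R.
Proof.
rewrite /box_poly coef_sum size_filter -sum_count.
by apply: eq_bigr => m _; rewrite coefXn eq_sym.
Qed.

Definition geo (k N : nat) : {poly int} := \sum_(i < N.+1) ('X^k) ^+ i.

Lemma box_poly_prod N : box_poly N =
  geo 1 N * geo 2 N * geo 2 N * geo 3 N * geo 3 N * (1 + 'X^3).
Proof.
have G k : geo k N = \sum_(a <- iota 0 N.+1) 'X^(k * a).
  rewrite /geo -(big_mkord xpredT) /index_iota subn0.
  by apply: eq_bigr => i _; rewrite exprM.
rewrite /box_poly /box !big_allpairs -!mulrA !G mulr_suml; apply: eq_bigr => a _.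
rewrite mulr_suml mulr_sumr; apply: eq_bigr => b _.
rewrite mulr_suml !mulr_sumr; apply: eq_bigr => c _.
rewrite mulr_suml !mulr_sumr; apply: eq_bigr => e _.
rewrite mulr_suml !mulr_sumr; apply: eq_bigr => f _.
rewrite !big_cons big_nil /w /w5 /= !exprD ?muln0 ?muln1 ?expr0 ?mul1n ?addr0 ?addn0.
ring.
Qed.

Lemma geo_mul k N : geo k N * (1 - 'X^k) = 1 - 'X^(k * N.+1).
Proof.
rewrite /geo exprM; elim: N => [|N IH]; first by rewrite big_ord1 expr0 mul1r expr1.
by rewrite big_ord_recr /= mulrDl IH !exprS; ring.
Qed.

Definition one_mod N (p : {poly int}) := exists q, p = 1 + 'X^(N.+1) * q.

Lemma one_modM N p q : one_mod N p -> one_mod N q -> one_mod N (p * q).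
Proof. by move=> [a ->] [b ->]; exists (a + b + 'X^(N.+1) * a * b); ring. Qed.

Lemma one_mod_sub N k : (N < k)%N -> one_mod N (1 - 'X^k).
Proof. by move=> hk; exists (- 'X^(k - N.+1)); rewrite mulrN -exprD subnKC. Qed.

Lemma coef_one_mod N (p q : {poly int}) n : one_mod N q -> (n <= N)%N ->
  (p * q)`_n = p`_n.
Proof.
move=> [r ->] hn; rewrite mulrDr mulr1 coefD mulrCA coefXnM.
by rewrite ltnS hn addr0.
Qed.

Lemma nmons_series n :
  \sum_(i < n.+1) (nmons i)%:Z * HilbDen`_(n - i) = HilbNum`_n.
Proof.
have -> : \sum_(i < n.+1) (nmons i)%:Z * HilbDen`_(n - i) = (box_poly n * HilbDen)`_n.
  rewrite coefM; apply: eq_bigr => i _.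
  by rewrite coef_box_poly size_mons ?natz // -ltnS ltn_ord.
have -> : box_poly n * HilbDen = HilbNum * ((1 - 'X^(1 * n.+1)) *
    (1 - 'X^(2 * n.+1)) * (1 - 'X^(2 * n.+1)) * (1 - 'X^(3 * n.+1)) *
    (1 - 'X^(3 * n.+1))).
  by rewrite -!geo_mul box_poly_prod /HilbDen /HilbNum expr1; ring.
apply: (@coef_one_mod n) => //.
by do 4 (apply: one_modM; last (apply: one_mod_sub; lia)); apply: one_mod_sub; lia.
Qed.

Section Dimension.
Variable C : numClosedFieldType.
Implicit Types M : 'M[C]_3.
Local Notation Q5 := (Q5 C).

Definition mono (m : E5) (x1 x2 x3 x4 x5 : C) : C :=
  let: (a, b, c, e, f) := m in x1 ^+ a * x2 ^+ b * x3 ^+ c * x4 ^+ e * x5 ^+ f.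

Definition m5 (m : E5) M := mono m (I1 M) (I2 M) (I3 M) (I4 M) (I5 M).
Definition mm (m : E) M := m5 m.1 M * I6 M ^+ m.2.

Lemma mm_hom (m : E) t M : mm m (t *: M) = t ^+ w m * mm m M.
Proof.
case: m => [[[[[a b] c] e] f] g]; have [e1 e2 e3 e4 e5] := invariantsZ t M.
rewrite /mm /m5 /mono /w /w5 /= e1 e2 e3 e4 e5 I6Z !exprMn !mulSn ?mul1n ?muln0.
by rewrite !exprD ?addn0 ?expr0; ring.
Qed.

Definition addE5 (m m' : E5) : E5 :=
  let: (a, b, c, e, f) := m in let: (a', b', c', e', f') := m' in
  (a + a', b + b', c + c', e + e', f + f')%N.

Lemma m5_add m m' M : m5 (addE5 m m') M = m5 m M * m5 m' M.
Proof.
case: m => [[[[a b] c] e] f]; case: m' => [[[[a' b'] c'] e'] f'].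
by rewrite /m5 /mono /= !exprD; ring.
Qed.

Definition in_span5 (f : 'M[C]_3 -> C) :=
  exists L : seq (C * E5), forall M, f M = \sum_(z <- L) z.1 * m5 z.2 M.

Lemma in_span5_ext f g : (forall M, f M = g M) -> in_span5 g -> in_span5 f.
Proof. by move=> fg [L hL]; exists L => M; rewrite fg hL. Qed.

Lemma in_span5_add f g :
  in_span5 f -> in_span5 g -> in_span5 (fun M => f M + g M).
Proof. by move=> [Lf hf] [Lg hg]; exists (Lf ++ Lg) => M; rewrite big_cat hf hg. Qed.

Lemma in_span5_mul f g :
  in_span5 f -> in_span5 g -> in_span5 (fun M => f M * g M).
Proof.
move=> [Lf hf] [Lg hg].
exists [seq (x.1 * y.1, addE5 x.2 y.2) | x <- Lf, y <- Lg] => M.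
rewrite hf hg big_allpairs_dep mulr_suml; apply: eq_bigr => x _.
by rewrite mulr_sumr; apply: eq_bigr => y _; rewrite /= m5_add; ring.
Qed.

Lemma in_span5_const c : in_span5 (fun _ => c).
Proof.
exists [:: (c, (0, 0, 0, 0, 0)%N)] => M.
by rewrite big_seq1 /m5 /mono /= !expr0 !mulr1.
Qed.

Lemma in_span5_coords :
  [/\ in_span5 (@I1 C), in_span5 (@I2 C), in_span5 (@I3 C), in_span5 (@I4 C)
    & in_span5 (@I5 C)].
Proof.
by split; [exists [:: (1, (1, 0, 0, 0, 0)%N)] | exists [:: (1, (0, 1, 0, 0, 0)%N)]
  | exists [:: (1, (0, 0, 1, 0, 0)%N)] | exists [:: (1, (0, 0, 0, 1, 0)%N)]
  | exists [:: (1, (0, 0, 0, 0, 1)%N)]] => M; rewrite big_seq1 /m5 /mono /=; ring.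
Qed.

(* Families of evaluations ev r M of the elements r of a ring, morphisms
   for each M, inverse to the constants [lift] and with values in the span;
   adjoining one more variable, evaluated at a function in the span, yields
   again such a family.  Iterating from C gives the values of P5 C. *)
Definition span_eval (R : nzSemiRingType) (ev : R -> 'M[C]_3 -> C) (lift : C -> R) :=
  [/\ forall M, eval_hom (ev ^~ M), forall c, central (lift c),
      forall c M, ev (lift c) M = c & forall r, in_span5 (ev r)].

Lemma span_eval_C : span_eval (fun c _ => c) id.
Proof.
split=> [M|c|//|c]; last exact: in_span5_const.
- by split.
- exact: centralC.
Qed.

Lemma span_eval_horner (R : nzSemiRingType) ev (lift : C -> R) x :
  span_eval ev lift -> in_span5 x ->
  span_eval (fun p M => ev p.[lift (x M)] M) (fun c => (lift c)%:P).
Proof.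
case=> hom cen hlift hspan hx; split=> [M|c|c M|p].
- exact: (eval_hom_horner (phi := ev ^~ M)).
- exact: central_polyC.
- by rewrite hornerC hlift.
elim/poly_ind: p => [|p c IH].
  by apply: (in_span5_ext _ (in_span5_const 0)) => M; case: (hom M); rewrite horner0.
apply: in_span5_ext (in_span5_add (in_span5_mul IH hx) (hspan c)) => M.
have [_ _ hD hM] := hom M.
by rewrite hornerMXaddC hD hM hlift.
Qed.

Lemma evI5_span (a : P5 C) : in_span5 (evI5 a).
Proof.
have [h1 h2 h3 h4 h5] := in_span5_coords.
case: (span_eval_horner (span_eval_horner (span_eval_horner (span_eval_horner
  (span_eval_horner span_eval_C h1) h2) h3) h4) h5) => _ _ _ h.
exact: h.
Qed.

Definition mon5 (m : E5) : Q5 :=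
  let: (a, b, c, e, f) := m in
  ((((('X^a : Q1 C)%:P * 'X^b : Q2 C)%:P * 'X^c : Q3 C)%:P * 'X^e : Q4 C)%:P * 'X^f).

Definition co5 (p : Q5) (m : E5) : C :=
  let: (a, b, c, e, f) := m in p`_f`_e`_c`_b`_a.

Lemma qe5_mon5 m x1 x2 x3 x4 x5 : qe5 (mon5 m) x1 x2 x3 x4 x5 = mono m x1 x2 x3 x4 x5.
Proof.
case: m => [[[[a b] c] e] f].
by rewrite /qe5 /mon5 /mono /l4 /l3 /l2 /l1 !(hornerM, hornerC, hornerXn, horner_exp).
Qed.

Lemma coefCX (R : nzSemiRingType) (u : R) n k : (u%:P * 'X^n)`_k = u *+ (k == n).
Proof. by rewrite coefCM coefXn mulr_natr. Qed.

Lemma co5_mon5 m m' : co5 (mon5 m) m' = (m == m')%:R.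
Proof.
case: m => [[[[a b] c] e] f]; case: m' => [[[[a' b'] c'] e'] f'] /=.
rewrite !(coefCX, coefMn, coefXn) -!mulrnA.
rewrite -[((a, b, c, e, f) == _)%:R]/(1 *+ ((a, b, c, e, f) == (a', b', c', e', f'))).
congr (_ *+ _); rewrite !xpair_eqE (eq_sym a) (eq_sym b) (eq_sym c) (eq_sym e) (eq_sym f).
by case: (a' == a); case: (b' == b); case: (c' == c); case: (e' == e); case: (f' == f).
Qed.

Lemma co5_lift_mul x (p : Q5) m : co5 (l5 x * p) m = x * co5 p m.
Proof.
case: m => [[[[a b] c] e] f] /=.
by rewrite /l5 coefCM /l4 coefCM /l3 coefCM /l2 coefCM /l1 coefCM.
Qed.

Lemma co5_sum I (r : seq I) (F : I -> Q5) m :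
  co5 (\sum_(i <- r) F i) m = \sum_(i <- r) co5 (F i) m.
Proof. by case: m => [[[[a b] c] e] f] /=; rewrite !coef_sum. Qed.

Lemma co5_0 m : co5 0 m = 0.
Proof. by case: m => [[[[a b] c] e] f] /=; rewrite !coef0. Qed.

Lemma qe5_comb (n : nat) (c : 'I_n -> C) (mu : 'I_n -> E5) a1 a2 a3 a4 a5 :
  qe5 (\sum_(i < n) l5 (c i) * mon5 (mu i)) a1 a2 a3 a4 a5 =
  \sum_(i < n) c i * mono (mu i) a1 a2 a3 a4 a5.
Proof.
rewrite (eval_sum (qe5_hom a1 a2 a3 a4 a5)); apply: eq_bigr => i _.
by rewrite qe5M qe5_const qe5_mon5.
Qed.

Definition mon6 (m : E) : P6 C := ((mon5 m.1 : Q5) : P5 C)%:P * 'X^(m.2).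

Lemma evI6_mon6 m M : evI6 (mon6 m) M = mm m M.
Proof.
have G := ev6_hom (I1 M) (I2 M) (I3 M) (I4 M) (I5 M) (I6 M); have [_ _ _ gM] := G.
by rewrite /evI6 /mon6 gM ev6C (eval_exp G 'X) ev6X ev5E qe5_mon5.
Qed.

Lemma mm_inRd (m : E) : inRd (w m) (mm m).
Proof.
split; first by exists (mon6 m) => M _; rewrite evI6_mon6.
by move=> t M _; rewrite mm_hom.
Qed.

(* Every element of R is a combination of the mm on sl(3), by (iii). *)
Lemma inR_span (F : 'M[C]_3 -> C) : inR F ->
  exists L : seq (C * E), forall M, \tr M = 0 -> F M = \sum_(z <- L) z.1 * mm z.2 M.
Proof.
move=> [p hp]; have [a [b hab]] := decomposition_exists p.
have [La ha] := evI5_span a; have [Lb hb] := evI5_span b.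
exists ([seq (z.1, (z.2, false)) | z <- La] ++ [seq (z.1, (z.2, true)) | z <- Lb]).
move=> M tM; rewrite hp // hab // ha hb big_cat !big_map /= mulr_sumr.
by congr (_ + _); apply: eq_bigr => z _; rewrite /mm /=; ring.
Qed.

(* A homogeneous combination only involves the monomials of its degree:
   compare the coefficients of t^d in F (t M) = t^d F M. *)
Lemma homogeneous_part d (F : 'M[C]_3 -> C) (L : seq (C * E)) :
  (forall M, \tr M = 0 -> F M = \sum_(z <- L) z.1 * mm z.2 M) ->
  (forall t M, \tr M = 0 -> F (t *: M) = t ^+ d * F M) ->
  forall M, \tr M = 0 -> F M = \sum_(z <- L) z.1 * mm z.2 M * (w z.2 == d)%:R.
Proof.
move=> hL hH M tM.
pose Q : {poly C} := \sum_(z <- L) (z.1 * mm z.2 M) *: 'X^(w z.2) - F M *: 'X^d.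
have Q0 : Q = 0.
  apply: (@poly_eq0_on C C id) => // t.
  have tt : \tr (t *: M) = 0 by rewrite mxtraceZ tM mulr0.
  rewrite /Q hornerD hornerN hornerZ hornerXn horner_sum.
  apply/eqP; rewrite subr_eq0; apply/eqP.
  rewrite [F M * _]mulrC -(hH t M tM) (hL _ tt); apply: eq_bigr => z _.
  by rewrite hornerZ hornerXn mm_hom; ring.
have := congr1 (fun q : {poly C} => q`_d) Q0.
rewrite /= /Q coefB coefZ coefXn eqxx mulr1 coef_sum coef0 => /eqP.
rewrite subr_eq0 => /eqP <-; apply: eq_bigr => z _.
by rewrite coefZ coefXn (eq_sym d).
Qed.

Definition e0 : E := ((0, 0, 0, 0, 0)%N, false).

Lemma sum_eq_nth (s : seq E) (us : uniq s) (x : E) (G : E -> C) :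
  \sum_(j < size s) (x == nth e0 s j)%:R * G (nth e0 s j) = (x \in s)%:R * G x.
Proof.
case: (boolP (x \in s)) => xs.
  have ks : (index x s < size s)%N by rewrite index_mem.
  rewrite (bigD1 (Ordinal ks)) //= nth_index // eqxx mul1r big1 ?addr0 //.
  move=> j /eqP nj; case: eqP => [ej|]; last by rewrite mul0r.
  by case: nj; apply: val_inj => /=; rewrite ej index_uniq.
rewrite mul0r big1 // => j _; case: eqP => [ej|]; last by rewrite mul0r.
by case/negP: xs; rewrite ej mem_nth.
Qed.

Lemma sum_nth_eq (s : seq E) (us : uniq s) (c : 'I_(size s) -> C) (i : 'I_(size s)) :
  \sum_(j < size s) c j * (nth e0 s j == nth e0 s i)%:R = c i.
Proof.
rewrite (bigD1 i) //= eqxx mulr1 big1 ?addr0 // => j nj.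
by rewrite nth_uniq // (_ : (j : nat) == i = false) ?mulr0 //; apply/negbTE.
Qed.

Definition comb (s : seq E) (c : 'I_(size s) -> C) (g : bool) : Q5 :=
  \sum_(i < size s) l5 (c i * ((nth e0 s i).2 == g)%:R) * mon5 (nth e0 s i).1.

Lemma eI5_comb s c g M : eI5 (@comb s c g) M =
  \sum_(i < size s) (c i * ((nth e0 s i).2 == g)%:R) * m5 (nth e0 s i).1 M.
Proof. exact: qe5_comb. Qed.

Lemma comb_eval s c M :
  eI5 (@comb s c false) M + I6 M * eI5 (@comb s c true) M =
  \sum_(i < size s) c i * mm (nth e0 s i) M.
Proof.
have /= -> := congr2 (fun u v => u + I6 M * v)
  (eI5_comb c false M) (eI5_comb c true M).
rewrite mulr_sumr -big_split; apply: eq_bigr => i _.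
by rewrite /mm /m5; case: (nth e0 s i).2 => /=; ring.
Qed.

Lemma comb_coef s (us : uniq s) (c : 'I_(size s) -> C) (i : 'I_(size s)) :
  co5 (@comb s c (nth e0 s i).2) (nth e0 s i).1 = c i.
Proof.
rewrite /comb co5_sum; under eq_bigr => j _ do rewrite co5_lift_mul co5_mon5.
rewrite -[RHS](sum_nth_eq us c i); apply: eq_bigr => j _.
rewrite -mulrA -natrM; congr (_ * _%:R).
case: (nth e0 s j) => [m1 g1]; case: (nth e0 s i) => [m2 g2] /=.
by rewrite xpair_eqE andbC; case: (_ == _); case: (_ == _).
Qed.

(* Distinct monomials mm are linearly independent on sl(3): by (ii a) and
   uniqueness in (iii) both parts of a vanishing combination are zero. *)
Lemma mm_indep (s : seq E) (us : uniq s) :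
  lin_indep (fun i : 'I_(size s) => mm (nth e0 s i)).
Proof.
move=> c hc i; rewrite -(comb_coef us c i).
have hAB M : \tr M = 0 -> eI5 (@comb s c false) M + I6 M * eI5 (@comb s c true) M = 0.
  by move=> tM; rewrite comb_eval hc.
have [/alg_indep A0 /I6_mul_eq0 B0] := decomposition_unique hAB.
by case: (nth e0 s i).2; rewrite ?A0 ?B0 co5_0.
Qed.

(* n + 1 functions in the span of n functions are linearly dependent on
   any subset P: a nonzero row of the kernel of the coefficient matrix. *)
Lemma span_dependent (X : Type) (P : X -> Prop) n (g : 'I_n -> X -> C)
    (f : 'I_n.+1 -> X -> C) :
  (forall i, exists v : 'I_n -> C, forall x, P x -> f i x = \sum_(j < n) v j * g j x) ->
  exists2 u : 'I_n.+1 -> C, (exists i, u i != 0) &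
    forall x, P x -> \sum_(i < n.+1) u i * f i x = 0.
Proof.
move=> rep; have [V hV] := fin_all_exists rep.
pose A : 'M[C]_(n.+1, n) := \matrix_(i, j) V i j.
have [k hk] : exists k, row k (kermx A) != 0.
  have Kn0 : kermx A != 0.
    by rewrite -mxrank_eq0 mxrank_ker subn_eq0 -ltnNge ltnS rank_leq_col.
  apply/existsP; move: Kn0; apply: contraR; rewrite negb_exists => /forallP hk.
  by apply/eqP/row_matrixP => k; move/negPn/eqP: (hk k) => ->; rewrite row0.
pose u := row k (kermx A).
have uA : u *m A = 0 by rewrite /u -row_mul mulmx_ker row0.
exists (fun i => u 0 i).
  case: (pickP (fun i => u 0 i != 0)) => [i ui|u0]; first by exists i.
  case/negP: hk; apply/eqP/rowP => j; move/negbFE/eqP: (u0 j).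
  by rewrite /u => ->; rewrite mxE.
move=> x Px; under eq_bigr => i _ do rewrite (hV i x Px) mulr_sumr.
rewrite exchange_big /=; apply: big1 => j _.
transitivity ((u *m A) 0 j * g j x).
  rewrite [(u *m A) 0 j]mxE mulr_suml; apply: eq_bigr => i _.
  by rewrite mulrA; congr (_ * _ * _); rewrite /A mxE.
by rewrite uA mxE mul0r.
Qed.

(* If s lists the exponents of degree d, any size s + 1 elements of R_d are
   dependent: by [homogeneous_part] all are combinations of the mm (s_j). *)
Lemma mm_span d (s : seq E) (us : uniq s) (ms : forall x, (x \in s) = (w x == d))
  (f : 'I_(size s).+1 -> 'M[C]_3 -> C) :
  (forall i, inRd d (f i)) -> ~ lin_indep f.
Proof.
move=> hf hind.
have rep i : exists v : 'I_(size s) -> C, forall M, \tr M = 0 ->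
    f i M = \sum_(j < size s) v j * mm (nth e0 s j) M.
  have [hR hH] := hf i; have [L hL] := inR_span hR.
  exists (fun j => \sum_(z <- L) z.1 * (z.2 == nth e0 s j)%:R) => M tM.
  rewrite (homogeneous_part hL hH) //.
  under [RHS]eq_bigr => j _ do rewrite mulr_suml.
  rewrite exchange_big /=; apply: eq_bigr => z _.
  under eq_bigr => j _ do rewrite -mulrA.
  rewrite -mulr_sumr (sum_eq_nth us z.2 (fun y => mm y M)) ms -mulrA.
  by congr (_ * _); rewrite mulrC.
have [u [i ui] hu] := span_dependent rep.
by move: ui; rewrite (hind u hu i) eqxx.
Qed.

Lemma dimRd_nmons d : dimRd C d (nmons d).
Proof.
split; last by apply: mm_span (uniq_mons d d) _ => x; rewrite mem_mons.
exists (fun i : 'I_(nmons d) => mm (nth e0 (mons d d) i)); split.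
  move=> i; have := mm_inRd (nth e0 (mons d d) i).
  by have := mem_nth e0 (ltn_ord i); rewrite mem_mons // => /eqP ->.
exact/mm_indep/uniq_mons.
Qed.
End Dimension.

Section Transport.
Variable C : numClosedFieldType.
Implicit Types M : 'M[C]_3.

Lemma evI5E (a : P5 C) M : evI5 a M = eI5 (a : Q5 C) M.
Proof. by rewrite /evI5 ev5E. Qed.

Lemma alg_indep_P5 (p : P5 C) : (forall M, \tr M = 0 -> evI5 p M = 0) -> p = 0.
Proof.
move=> h; have p0 : (p : Q5 C) = 0 by apply: alg_indep => M tM; rewrite -evI5E h.
exact_no_check p0.
Qed.

Lemma decomposition_unique_P5 (a b : P5 C) :
  (forall M, \tr M = 0 -> evI5 a M + I6 M * evI5 b M = 0) ->
  (forall M, \tr M = 0 -> evI5 a M = 0) /\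
  (forall M, \tr M = 0 -> I6 M * evI5 b M = 0).
Proof.
move=> h; have h' M : \tr M = 0 -> eI5 (a : Q5 C) M + I6 M * eI5 (b : Q5 C) M = 0.
  by move=> tM; rewrite -!evI5E h.
have [ha hb] := decomposition_unique h'.
by split=> M tM; rewrite evI5E; [exact: ha | exact: hb].
Qed.
End Transport.

Theorem mainTheorem5 (C : numClosedFieldType) :
  (* (i) the syzygy *)
  (forall M : 'M[C]_3, \tr M = 0 ->
     I2 M * I3 M ^+ 2 - 4%:R * I4 M * I5 M - I6 M ^+ 2 = 0) /\
  (* (ii a) I1,...,I5 algebraically independent *)
  (forall p : P5 C, (forall M : 'M[C]_3, \tr M = 0 -> evI5 p M = 0) -> p = 0) /\
  (* (ii b) the relation generates the ideal of relations among I1,...,I6 *)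
  (forall p : P6 C, (forall M : 'M[C]_3, \tr M = 0 -> evI6 p M = 0) ->
     exists q : P6 C, p = q * Rel C) /\
  (* (iii) R = C[I1..I5] (+) I6 C[I1..I5] *)
  ((forall p : P6 C, exists a b : P5 C, forall M : 'M[C]_3, \tr M = 0 ->
       evI6 p M = evI5 a M + I6 M * evI5 b M) /\
   (forall a b : P5 C,
       (forall M : 'M[C]_3, \tr M = 0 -> evI5 a M + I6 M * evI5 b M = 0) ->
       (forall M : 'M[C]_3, \tr M = 0 -> evI5 a M = 0) /\
       (forall M : 'M[C]_3, \tr M = 0 -> I6 M * evI5 b M = 0))) /\
  (* (iv) Hilbert series: H(R,q) * HilbDen = HilbNum as formal power series *)
  (exists h : nat -> nat,
     (forall d, dimRd C d (h d)) /\
     forall n : nat,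
       \sum_(i < n.+1) (h i)%:Z * HilbDen`_(n - i) = HilbNum`_n).
Proof.
split; first by move=> M _; exact: syzygy.
split; first exact: alg_indep_P5.
split; first exact: relations_generated.
split; first by split; [exact: decomposition_exists | exact: decomposition_unique_P5].
by exists nmons; split; [exact: dimRd_nmons | exact: nmons_series].
Qed.
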